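(* Let $\mathcal{A},\mathcal{C}$ be small categories. Consider the following paracategories (structures like categories but where composition need not be defined): $[\mathcal{C}^\diamond,\mathbf{Set}]$, with objects functors $\mathcal{C}^{op}\times\mathcal{C}\to\mathbf{Set}$ and morphisms dinatural transformations; $[\mathcal{A}^{op}\times\mathcal{A}\times\mathcal{C}^\diamond,\mathbf{Set}]$, with objects functors $P:\mathcal{A}^{op}\times\mathcal{A}\times\mathcal{C}^{op}\times\mathcal{C}\to\mathbf{Set}$ and morphisms $P\to Q$ the families $\alpha_{a,b,x}:P(a,b,x,x)\to Q(a,b,x,x)$ natural in $a\in\mathcal{A}^{op}$, $b\in\mathcal{A}$ and dinatural in $x\in\mathcal{C}$; and $[\mathcal{A}^\diamond\times\mathcal{C}^\diamond,\mathbf{Set}]$, with the same objects and morphisms $P\to Q$ the families $\alpha_{z,x}:P(z,z,x,x)\to Q(z,z,x,x)$ dinatural in $(z,x)\in\mathcal{A}\times\mathcal{C}$. Define the (para)functors: $\pi_{\mathcal{A}}^*:[\mathcal{C}^\diamond,\mathbf{Set}]\to[\mathcal{A}^\diamond\times\mathcal{C}^\diamond,\mathbf{Set}]$ by precomposition with the projection, $\pi_{\mathcal{A}}^*(\Gamma)(z',z,x',x)=\Gamma(x',x)$, $(\pi^*_{\mathcal{A}}\alpha)_{z,x}=\alpha_x$; $\hom_{\mathcal{A}}\times-:[\mathcal{C}^\diamond,\mathbf{Set}]\to[\mathcal{A}^{op}\times\mathcal{A}\times\mathcal{C}^\diamond,\mathbf{Set}]$ by $(\hom_{\mathcal{A}}\times\Gamma)(a,b,x',x)=\hom_{\mathcal{A}}(a,b)\times\Gamma(x',x)$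 and $(\hom_{\mathcal{A}}\times\alpha)_{a,b,x}(e,k)=(e,\alpha_x(k))$; and $\Delta_{\mathcal{A}}\times-:[\mathcal{A}^{op}\times\mathcal{A}\times\mathcal{C}^\diamond,\mathbf{Set}]\to[\mathcal{A}^\diamond\times\mathcal{C}^\diamond,\mathbf{Set}]$ by the identity on objects and $(\Delta_{\mathcal{A}}\times\alpha)_{z,x}=\alpha_{z,z,x}$. Then $\hom_{\mathcal{A}}\times-$ is a $\pi^*_{\mathcal{A}}$-relative left adjoint of $\Delta_{\mathcal{A}}\times-$, i.e. there is a bijection $$[\mathcal{A}^{op}\times\mathcal{A}\times\mathcal{C}^\diamond,\mathbf{Set}](\hom_{\mathcal{A}}\times\Gamma,P)\cong[\mathcal{A}^\diamond\times\mathcal{C}^\diamond,\mathbf{Set}](\pi^*_{\mathcal{A}}\Gamma,\Delta_{\mathcal{A}}\times P)$$ natural in $\Gamma\in[\mathcal{C}^\diamond,\mathbf{Set}]$ and $P\in[\mathcal{A}^{op}\times\mathcal{A}\times\mathcal{C}^\diamond,\mathbf{Set}]$.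
   Context: For difunctors $F,G:\mathcal{B}^{op}\times\mathcal{B}\to\mathcal{D}$, a dinatural transformation is a family $\alpha_x:F(x,x)\to G(x,x)$ such that for every $f:a\to b$: $G(f,\mathrm{id}_b)\circ\alpha_b\circ F(\mathrm{id}_b,f)=G(\mathrm{id}_a,f)\circ\alpha_a\circ F(f,\mathrm{id}_a)$. Given functors $L:\mathcal{C}\to\mathcal{D}$, $R:\mathcal{D}\to\mathcal{X}$, $J:\mathcal{C}\to\mathcal{X}$, $L$ is a $J$-relative left adjoint of $R$ if $\mathcal{D}(L(x),y)\cong\mathcal{X}(J(x),R(y))$ naturally in $x\in\mathcal{C}$, $y\in\mathcal{D}$. *)

Set Implicit Arguments.
Unset Strict Implicit.

Record Cat := {
  ob :> Type;
  hom : ob -> ob -> Type;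
  idc : forall a, hom a a;
  comp : forall a b c, hom b c -> hom a b -> hom a c;
  comp_id_l : forall a b (f : hom a b), comp (idc b) f = f;
  comp_id_r : forall a b (f : hom a b), comp f (idc a) = f;
  comp_assoc : forall a b c d (f : hom a b) (g : hom b c) (h : hom c d),
      comp h (comp g f) = comp (comp h g) f
}.

Arguments idc {C} a : rename.
Arguments comp {C a b c} : rename.
Arguments hom {C} : rename.

Record Difun (C : Cat) := {
  d0 :> C -> C -> Type;
  dmap : forall (a a' b b' : C), hom a' a -> hom b b' -> d0 a b -> d0 a' b';
  dmap_id : forall a b (u : d0 a b), dmap (idc a) (idc b) u = u;
  dmap_comp : forall a a' a'' b b' b''
      (f : hom a' a) (f' : hom a'' a') (g : hom b b') (g' : hom b' b'') u,
      dmap (comp f f') (comp g' g) u = dmap f' g' (dmap f g u)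
}.
Arguments dmap {C} F {a a' b b'} : rename.

Definition dinatural (C : Cat) (F G : Difun C)
  (alpha : forall x : C, F x x -> G x x) : Prop :=
  forall (a b : C) (f : hom a b) (u : F b a),
    dmap G f (idc b) (alpha b (dmap F (idc b) f u))
    = dmap G (idc a) f (alpha a (dmap F f (idc a) u)).

Definition DiMor (C : Cat) (F G : Difun C) : Type :=
  { alpha : forall x : C, F x x -> G x x | dinatural alpha }.

Record Quadfun (A C : Cat) := {
  q0 :> A -> A -> C -> C -> Type;
  qmap : forall (a a' b b' : A) (x x' y y' : C),
      hom a' a -> hom b b' -> hom x' x -> hom y y' ->
      q0 a b x y -> q0 a' b' x' y';
  qmap_id : forall a b x y (u : q0 a b x y),
      qmap (idc a) (idc b) (idc x) (idc y) u = u;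
  qmap_comp : forall a a' a'' b b' b'' x x' x'' y y' y''
      (e : hom a' a) (e' : hom a'' a') (g : hom b b') (g' : hom b' b'')
      (f : hom x' x) (f' : hom x'' x') (h : hom y y') (h' : hom y' y'') u,
      qmap (comp e e') (comp g' g) (comp f f') (comp h' h) u
      = qmap e' g' f' h' (qmap e g f h u)
}.
Arguments qmap {A C} P {a a' b b' x x' y y'} : rename.

Definition isM1 (A C : Cat) (P Q : Quadfun A C)
  (alpha : forall (a b : A) (x : C), P a b x x -> Q a b x x) : Prop :=
  (forall (a a' b : A) (x : C) (e : hom a' a) (u : P a b x x),
      qmap Q e (idc b) (idc x) (idc x) (alpha a b x u)
      = alpha a' b x (qmap P e (idc b) (idc x) (idc x) u)) /\
  (forall (a b b' : A) (x : C) (g : hom b b') (u : P a b x x),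
      qmap Q (idc a) g (idc x) (idc x) (alpha a b x u)
      = alpha a b' x (qmap P (idc a) g (idc x) (idc x) u)) /\
  (forall (a b : A) (x y : C) (f : hom x y) (u : P a b y x),
      qmap Q (idc a) (idc b) f (idc y)
        (alpha a b y (qmap P (idc a) (idc b) (idc y) f u))
      = qmap Q (idc a) (idc b) (idc x) f
        (alpha a b x (qmap P (idc a) (idc b) f (idc x) u))).

Definition M1 (A C : Cat) (P Q : Quadfun A C) : Type :=
  { alpha : forall (a b : A) (x : C), P a b x x -> Q a b x x | isM1 alpha }.

Definition isM2 (A C : Cat) (P Q : Quadfun A C)
  (alpha : forall (z : A) (x : C), P z z x x -> Q z z x x) : Prop :=
  forall (z w : A) (x y : C) (g : hom z w) (f : hom x y) (u : P w z y x),
    qmap Q g (idc w) f (idc y) (alpha w y (qmap P (idc w) g (idc y) f u))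
    = qmap Q (idc z) g (idc x) f (alpha z x (qmap P g (idc z) f (idc x) u)).

Definition M2 (A C : Cat) (P Q : Quadfun A C) : Type :=
  { alpha : forall (z : A) (x : C), P z z x x -> Q z z x x | isM2 alpha }.

Definition piStar_obj (A C : Cat) (G : Difun C) : A -> A -> C -> C -> Type :=
  fun _ _ x' x => G x' x.

Definition piStar (A C : Cat) (G : Difun C) : Quadfun A C.
Proof.
  refine {| q0 := @piStar_obj A C G;
            qmap := fun a a' b b' x x' y y' e g f h u => dmap G f h u |}.
  - intros; apply dmap_id.
  - intros; apply dmap_comp.
Defined.

Definition homTimes_obj (A C : Cat) (G : Difun C) : A -> A -> C -> C -> Type :=
  fun a b x' x => (hom a b * G x' x)%type.

Definition homTimes (A C : Cat) (G : Difun C) : Quadfun A C.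
Proof.
  refine {| q0 := @homTimes_obj A C G;
            qmap := fun a a' b b' x x' y y' e g f h u =>
              (comp g (comp (fst u) e), dmap G f h (snd u)) |}.
  - intros a b x y [k c]; simpl.
    rewrite comp_id_r, comp_id_l, dmap_id; reflexivity.
  - intros a a' a'' b b' b'' x x' x'' y y' y'' e e' g g' f f' h h' [k c];
      simpl.
    rewrite dmap_comp. f_equal.
    rewrite !comp_assoc. reflexivity.
Defined.

(* Delta_A x - is the identity on objects: a morphism
   pi^* Gamma -> Delta_A x P in [A^<> x C^<>, Set] is an element of
   M2 (piStar Gamma) P. *)

Definition leftComposite (A C : Cat) (G G' : Difun C) (P P' : Quadfun A C)
  (beta : DiMor G' G) (gamma : M1 P P') (h : M1 (homTimes A G) P) :
  forall (a b : A) (x : C), homTimes A G' a b x x -> P' a b x x :=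
  fun a b x p =>
    proj1_sig gamma a b x (proj1_sig h a b x (fst p, proj1_sig beta x (snd p))).

Definition rightComposite (A C : Cat) (G G' : Difun C) (P P' : Quadfun A C)
  (beta : DiMor G' G) (gamma : M1 P P') (k : M2 (piStar A G) P) :
  forall (z : A) (x : C), piStar A G' z z x x -> P' z z x x :=
  fun z x c => proj1_sig gamma z z x (proj1_sig k z x (proj1_sig beta x c)).

Definition is_bijection (X Y : Type) (f : X -> Y) : Prop :=
  exists g : Y -> X, (forall x, g (f x) = x) /\ (forall y, f (g y) = y).

Arguments leftComposite {A C G G' P P'} beta gamma h a b x _.
Arguments rightComposite {A C G G' P P'} beta gamma k z x _.

(* Proof: a family [h_{a,b,x} : hom(a,b) * Gamma(x,x) -> P(a,b,x,x)] natural in [b]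
   is determined, by the Yoneda lemma, by its values [k_{z,x}(c) := h_{z,z,x}(id_z, c)],
   since [h_{a,b,x}(e, c) = P(id, e, id, id)(k_{a,x}(c))].  Under this correspondence
   naturality in [a] of [h] is dinaturality in [z] of [k], and dinaturality in [x] is
   unchanged.  Naturality of the bijection holds on the nose, because the transpose of
   [gamma o h o (hom x beta)] is literally [gamma o k o beta]. *)

From Corelib Require Import ssreflect.
From Stdlib Require Import FunctionalExtensionality ProofIrrelevance.

Set Implicit Arguments.
Unset Strict Implicit.

Ltac qmap_fuse := rewrite <- ?qmap_comp, ?comp_id_l, ?comp_id_r.

Section QuadfunFunctoriality.

Variables (A C : Cat) (P : Quadfun A C).

Lemma qmap_splitAC a a' b b' x x' y y'
    (e : hom a' a) (g : hom b b') (f : hom x' x) (h : hom y y') u :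
  qmap P e g f h u = qmap P (idc _) (idc _) f h (qmap P e g (idc _) (idc _) u).
Proof. by qmap_fuse. Qed.

Lemma qmap_split_snd a a' b b' x x' y y'
    (e : hom a' a) (g : hom b b') (f : hom x' x) (h : hom y y') u :
  qmap P e g f h u = qmap P (idc _) g (idc _) (idc _) (qmap P e (idc _) f h u).
Proof. by qmap_fuse. Qed.

Lemma qmap_commute a a' b b' x x' y y'
    (e : hom a' a) (g : hom b b') (f : hom x' x) (h : hom y y') u :
  qmap P (idc _) (idc _) f h (qmap P e g (idc _) (idc _) u)
  = qmap P e g (idc _) (idc _) (qmap P (idc _) (idc _) f h u).
Proof. by qmap_fuse. Qed.

End QuadfunFunctoriality.

Definition natural_snd (A C : Cat) (P Q : Quadfun A C)
    (alpha : forall (a b : A) (x : C), P a b x x -> Q a b x x) : Prop :=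
  forall (a b b' : A) (x : C) (g : hom b b') (u : P a b x x),
    qmap Q (idc a) g (idc x) (idc x) (alpha a b x u)
    = alpha a b' x (qmap P (idc a) g (idc x) (idc x) u).

Lemma isM1_natural_snd (A C : Cat) (P Q : Quadfun A C) alpha :
  @isM1 A C P Q alpha -> natural_snd alpha.
Proof. by case=> _ []. Qed.

Section Transpose.

Variables (A C : Cat) (G : Difun C) (P : Quadfun A C).

Definition diag (L : forall (a b : A) (x : C), homTimes A G a b x x -> P a b x x) :
    forall (z : A) (x : C), piStar A G z z x x -> P z z x x :=
  fun z x c => L z z x (idc z, c).

Definition extend (k : forall (z : A) (x : C), piStar A G z z x x -> P z z x x) :
    forall (a b : A) (x : C), homTimes A G a b x x -> P a b x x :=
  fun a b x p => qmap P (idc a) (fst p) (idc x) (idc x) (k a x (snd p)).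

Lemma diag_extend k : diag (extend k) = k.
Proof.
  apply: functional_extensionality_dep => z.
  apply: functional_extensionality_dep => x.
  apply: functional_extensionality_dep => c.
  exact: qmap_id.
Qed.

Lemma extend_diag L : natural_snd L -> extend (diag L) = L.
Proof.
  move=> HL.
  apply: functional_extensionality_dep => a.
  apply: functional_extensionality_dep => b.
  apply: functional_extensionality_dep => x.
  apply: functional_extensionality_dep => -[e c].
  rewrite /extend /diag /= HL /=.
  by rewrite comp_id_l comp_id_r dmap_id.
Qed.

Lemma isM2_diag L : isM1 L -> isM2 (diag L).
Proof.
  case=> [Ha [Hb Hx]] z w x y g f u /=.
  rewrite /diag qmap_splitAC Ha /= (qmap_splitAC (idc z) g) Hb /=.
  rewrite !comp_id_l !comp_id_r !dmap_id.
  by move: (Hx z w x y f (g, u)); rewrite /= !comp_id_l !comp_id_r.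
Qed.

Lemma isM1_extend k : isM2 k -> isM1 (extend k).
Proof.
  move=> K; rewrite /extend; split; [|split].
  - move=> a a' b x e [e0 c] /=; rewrite dmap_id.
    qmap_fuse; rewrite qmap_split_snd.
    move: (K a' a x x e (idc x) c); rewrite /= dmap_id => ->.
    by qmap_fuse.
  - move=> a b b' x g [e0 c] /=.
    by rewrite dmap_id; qmap_fuse.
  - move=> a b x y f [e0 c] /=.
    rewrite !comp_id_l !comp_id_r !qmap_commute.
    by move: (K a a x y (idc a) f c) => /= ->.
Qed.

Lemma isM1_of_isM2_diag L : natural_snd L -> isM2 (diag L) -> isM1 L.
Proof. by move=> HL /isM1_extend; rewrite extend_diag. Qed.

Definition transpose (h : M1 (homTimes A G) P) : M2 (piStar A G) P :=
  exist _ (diag (proj1_sig h)) (isM2_diag (proj2_sig h)).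

Definition untranspose (k : M2 (piStar A G) P) : M1 (homTimes A G) P :=
  exist _ (extend (proj1_sig k)) (isM1_extend (proj2_sig k)).

Lemma transpose_bijective : is_bijection transpose.
Proof.
  exists untranspose; split.
  - move=> [L HL]; apply: subset_eq_compat.
    exact/extend_diag/isM1_natural_snd.
  - by move=> [k K]; apply: subset_eq_compat; exact: diag_extend.
Qed.

End Transpose.

Lemma leftComposite_natural_snd (A C : Cat) (G G' : Difun C) (P P' : Quadfun A C)
    (beta : DiMor G' G) (gamma : M1 P P') (h : M1 (homTimes A G) P) :
  natural_snd (leftComposite beta gamma h).
Proof.
  move=> a b b' x g0 [e c].
  rewrite /leftComposite /= (isM1_natural_snd (proj2_sig gamma)).
  by rewrite (isM1_natural_snd (proj2_sig h)) /= !dmap_id.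
Qed.

Theorem mainTheorem3 (A C : Cat) :
  exists phi : forall (G : Difun C) (P : Quadfun A C),
      M1 (homTimes A G) P -> M2 (piStar A G) P,
    (forall G P, is_bijection (phi G P)) /\
    (forall (G G' : Difun C) (P P' : Quadfun A C)
            (beta : DiMor G' G) (gamma : M1 P P') (h : M1 (homTimes A G) P),
        (isM1 (leftComposite beta gamma h) <->
         isM2 (rightComposite beta gamma (phi G P h))) /\
        (forall H : isM1 (leftComposite beta gamma h),
           forall (z : A) (x : C) (c : G' x x),
             proj1_sig (phi G' P' (exist _ (leftComposite beta gamma h) H)) z x c
             = rightComposite beta gamma (phi G P h) z x c)).
Proof.
  exists (@transpose A C); split; first exact: transpose_bijective.
  move=> G G' P P' beta gamma h; split; last by [].
  split; first exact: isM2_diag.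
  exact/isM1_of_isM2_diag/leftComposite_natural_snd.
Qed.
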